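(* For every $\alpha>0$ there is $L_0$ such that for every integer $L\geq L_0$ there is $\vartheta_0>0$ such that for every $0<\vartheta\leq\vartheta_0$ there is $n_0$ such that for all $n\geq n_0$ the following holds. Let $H=([n],E)$ be a $3$-uniform hypergraph with $d(i,j)\geq\min\left(i,j,\frac{n}{2}\right)+\alpha n$ for all $\{i,j\}\in[n]^{(2)}$, and let $\mathcal{R}\subseteq[n]$ be a set with $\frac{\vartheta^2}{2}n\leq|\mathcal{R}|\leq\vartheta^2 n$ such that for all disjoint ordered pairs of distinct vertices $(x,y),(w,z)\in[n]^2$ there are at least $\vartheta|\mathcal{R}|^{L-2}/2$ tight paths of length $L$ in $H$ connecting $(x,y)$ and $(w,z)$ with all internal vertices in $\mathcal{R}$. If $\mathcal{R}'\subseteq\mathcal{R}$ with $|\mathcal{R}'|\leq 2\vartheta^4 n$, then for all disjoint ordered pairs of distinct vertices $(x,y),(w,z)\in[n]^2$ there is a tight $(x,y)$-$(w,z)$-path of length $L$ in $H$ with all internal vertices belonging to $\mathcal{R}\setminus\mathcal{R}'$.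
   Context: Vertices are the integers $[n]$, compared as integers. $d(v,w)=|\{x: \{v,w,x\}\in E\}|$ is the pair degree. A tight path of length $\ell$ (number of edges) is a 3-graph on distinct vertices $x_1,\dots,x_{\ell+2}$ with edges $x_ix_{i+1}x_{i+2}$, $i\in[\ell]$; it is an $(x_1,x_2)$-$(x_{\ell+1},x_{\ell+2})$-path (connects these pairs), and its internal vertices are $x_3,\dots,x_\ell$. *)

From HB Require Import structures.
From mathcomp Require Import all_boot all_order all_algebra.
From mathcomp Require Import reals.
Set Implicit Arguments. Unset Strict Implicit. Unset Printing Implicit Defensive.

(* Vertex set [n] = {1,...,n} is represented by 'I_n : vertex v stands for the
   integer v+1 (see [label]).  A 3-graph is a set E of 3-element subsets. *)

Definition label (n : nat) (v : 'I_n) : nat := (val v).+1.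

Definition uniform3 (n : nat) (E : {set {set 'I_n}}) : Prop :=
  forall e, e \in E -> #|e| = 3.

Definition pair_deg (n : nat) (E : {set {set 'I_n}}) (v w : 'I_n) : nat :=
  #|[set x : 'I_n | [set v; w; x] \in E]|.

(* A tight path of length L is given by its vertex sequence x_1..x_{L+2},
   encoded as an injective map f : 'I_(L+2) -> 'I_n (f i = x_{i+1}),
   with edges x_i x_{i+1} x_{i+2}, i in [L]. *)
Definition tight_path (n : nat) (E : {set {set 'I_n}}) (L : nat)
    (f : {ffun 'I_L.+2 -> 'I_n}) : bool :=
  injectiveb f &&
  [forall i : 'I_L.+2, (val i < L) ==>
     ([set f i; f (inord i.+1); f (inord i.+2)] \in E)].

Definition connecting_path (n : nat) (E : {set {set 'I_n}}) (L : nat)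
    (x y w z : 'I_n) (S : {set 'I_n}) (f : {ffun 'I_L.+2 -> 'I_n}) : bool :=
  [&& tight_path E f,
      f (inord 0) == x, f (inord 1) == y,
      f (inord L) == w, f (inord L.+1) == z &
      [forall i : 'I_L.+2, ((2 <= val i) && (val i < L)) ==> (f i \in S)]].

Definition num_paths (n : nat) (E : {set {set 'I_n}}) (L : nat)
    (x y w z : 'I_n) (S : {set 'I_n}) : nat :=
  #|[set f : {ffun 'I_L.+2 -> 'I_n} | connecting_path E x y w z S f]|.

Definition disj_pairs (n : nat) (x y w z : 'I_n) : bool :=
  [&& x != y, w != z, x != w, x != z, y != w & y != z].

From HB Require Import structures.
From mathcomp Require Import all_boot all_order all_algebra.
From mathcomp Require Import reals.
From mathcomp Require Import zify ring lra.
Set Implicit Arguments.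
Unset Strict Implicit.
Unset Printing Implicit Defensive.

Import Order.TTheory GRing.Theory Num.Theory.

(* A tight path with fixed end pairs is determined by its k = L - 2 internal
   vertices.  If no path has all of them in R \ R', the internal vertex sequences
   of the paths counted in the hypothesis lie in R^k minus (R \ R')^k, so there
   are at most |R|^k - |R \ R'|^k <= k |R'| |R|^(k-1) of them.  Since
   |R'| <= 2 θ^4 n <= 4 θ^2 |R|, this is below θ |R|^k / 2 once 8 k θ < 1, so
   θ0 = 1/(8 (L - 1)) works for every L >= 2. *)

Lemma leq_subn_exp a b k :
  b <= a -> a ^ k - b ^ k <= (a - b) * (k * a ^ k.-1).
Proof.
move=> le_ba; rewrite subn_exp leq_mul2l; apply/orP; right.
rewrite -[k in k * _]card_ord -sum_nat_const; apply: leq_sum => i _.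
have le_ik : i <= k.-1 by have := ltn_ord i; lia.
rewrite -[in leqRHS](subnK le_ik) expnD leq_mul //.
by case: (val i) => [|j]; rewrite ?expn0 ?leq_exp2r.
Qed.

Section ConnectingPaths.
Variables (n k : nat) (E : {set {set 'I_n}}) (x y w z : 'I_n).

Definition internal_vertices (f : {ffun 'I_k.+4 -> 'I_n}) : {ffun 'I_k -> 'I_n} :=
  [ffun j : 'I_k => f (inord j.+2)].

Lemma connecting_pathE S f :
  connecting_path E x y w z S f =
  [&& tight_path E f, f (inord 0) == x, f (inord 1) == y,
      f (inord k.+2) == w, f (inord k.+3) == z &
      internal_vertices f \in ffun_on S].
Proof.
rewrite /connecting_path; do 5 congr andb.
apply/forallP/ffun_onP => [inS j | inS [i lt_i]]; rewrite ?ffunE /=.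
  have lt_jk := ltn_ord j.
  by have /implyP := inS (inord j.+2); rewrite /= inordK /=; [apply; lia | lia].
apply/implyP => /andP [le2i lt_ik].
have lt_i2 : i - 2 < k by lia.
have := inS (Ordinal lt_i2); rewrite ffunE /=.
by congr (f _ \in S); apply: val_inj; rewrite /= inordK; lia.
Qed.

Lemma internal_vertices_inj S f g :
  connecting_path E x y w z S f -> connecting_path E x y w z S g ->
  internal_vertices f = internal_vertices g -> f = g.
Proof.
rewrite !connecting_pathE.
case/and5P => _ /eqP f0 /eqP f1 /eqP f2 /andP [/eqP f3 _].
case/and5P => _ /eqP g0 /eqP g1 /eqP g2 /andP [/eqP g3 _] eq_fg.
apply/ffunP => -[i lt_i].
have at_inord j : j = i -> Ordinal lt_i = inord j.
  by move=> ->; apply: val_inj; rewrite /= inordK.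
case: i lt_i at_inord => [|[|i]] lt_i at_inord.
- by rewrite (at_inord 0%N) // f0 g0.
- by rewrite (at_inord 1%N) // f1 g1.
have [lt_ik | le_ki] := ltnP i k.
  have := congr1 (fun h : {ffun 'I_k -> 'I_n} => h (Ordinal lt_ik)) eq_fg.
  by rewrite !ffunE (at_inord i.+2).
have [i_k | i_k1] : i = k \/ i = k.+1 by lia.
- by rewrite (at_inord k.+2) ?f2 ?g2 // i_k.
- by rewrite (at_inord k.+3) ?f3 ?g3 // i_k1.
Qed.

Lemma num_paths_avoiding_le S T :
  (forall f : {ffun 'I_k.+4 -> 'I_n}, ~~ connecting_path E x y w z (S :\: T) f) ->
  num_paths E k.+2 x y w z S <= #|S| ^ k - #|S :\: T| ^ k.
Proof.
move=> avoid.
set P := [set f : {ffun 'I_k.+4 -> 'I_n} | connecting_path E x y w z S f].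
set onS := [set g : {ffun 'I_k -> 'I_n} | g \in ffun_on S].
set onST := [set g : {ffun 'I_k -> 'I_n} | g \in ffun_on (S :\: T)].
have sub_img : internal_vertices @: P \subset onS :\: onST.
  apply/subsetP => _ /imsetP [f + ->].
  rewrite inE connecting_pathE => /and5P [path0 f0 f1 f2 /andP [f3 onS_f]].
  have := avoid f; rewrite connecting_pathE path0 f0 f1 f2 f3 /=.
  by rewrite in_setD !in_set onS_f andbT.
have sub_on : onST \subset onS.
  apply/subsetP => g; rewrite !inE => /ffun_onP onST_g.
  by apply/ffun_onP => j; have := onST_g j; rewrite inE => /andP [].
have := subset_leq_card sub_img.
rewrite card_in_imset => [|f g]; last by rewrite !inE; apply: internal_vertices_inj.
by rewrite cardsD (setIidPr sub_on) [#|onS|]cardsE [#|onST|]cardsE !card_ffun_on card_ord.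
Qed.

Lemma num_paths_avoiding_small_le S T :
  (forall f : {ffun 'I_k.+4 -> 'I_n}, ~~ connecting_path E x y w z (S :\: T) f) ->
  num_paths E k.+2 x y w z S <= #|T| * (k * #|S| ^ k.-1).
Proof.
move=> avoid; apply: leq_trans (num_paths_avoiding_le avoid) _.
have le_SIT_S : #|S :&: T| <= #|S| by rewrite subset_leq_card ?subsetIl.
have le_SDT_S : #|S :\: T| <= #|S| by rewrite subset_leq_card ?subsetDl.
apply: leq_trans (leq_subn_exp k le_SDT_S) _.
rewrite leq_mul2r cardsD subKn //; apply/orP; right.
by rewrite subset_leq_card ?subsetIr.
Qed.

End ConnectingPaths.

Local Open Scope ring_scope.

Lemma path_count_gap (R : realFieldType) (k : nat) (th a r : R) :
  0 < th -> 0 < a -> r <= 4 * th ^+ 2 * a -> 8 * k%:R * th < 1 ->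
  r * (k%:R * a ^+ k.-1) < th * a ^+ k / 2.
Proof.
move=> th_gt0 a_gt0 r_le th_small.
case: k th_small => [|k] th_small; first by rewrite mul0r mulr0 expr0 mulr1 divr_gt0.
set K := k.+1%:R in th_small *.
have K_ge0 : 0 <= K by rewrite ler0n.
have gap : r * K < th * a / 2.
  have : 0 < (1 - 8 * K * th) * (th * a) by rewrite mulr_gt0 ?subr_gt0 ?mulr_gt0.
  have : 0 <= K * (4 * th ^+ 2 * a - r) by rewrite mulr_ge0 ?subr_ge0.
  rewrite expr2; nra.
have -> : r * (K * a ^+ k.+1.-1) = r * K * a ^+ k by rewrite mulrA.
have -> : th * a ^+ k.+1 / 2 = th * a / 2 * a ^+ k by rewrite exprS; ring.
by rewrite ltr_pM2r ?exprn_gt0.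
Qed.

Theorem lemma2p3 (R : realType) :
  forall alpha : R, 0 < alpha ->
  exists L0 : nat, forall L : nat, (L0 <= L)%N ->
  exists theta0 : R, 0 < theta0 /\
  forall theta : R, 0 < theta -> theta <= theta0 ->
  exists n0 : nat, forall n : nat, (n0 <= n)%N ->
  forall (E : {set {set 'I_n}}) (Rs Rs' : {set 'I_n}),
    uniform3 E ->
    (forall i j : 'I_n, i != j ->
       Num.min (Num.min ((label i)%:R) ((label j)%:R)) (n%:R / 2) + alpha * n%:R
         <= (pair_deg E i j)%:R) ->
    theta ^+ 2 / 2 * n%:R <= (#|Rs|)%:R ->
    (#|Rs|)%:R <= theta ^+ 2 * n%:R ->
    (forall x y w z : 'I_n, disj_pairs x y w z ->
       theta * (#|Rs|)%:R ^+ (L - 2) / 2 <= (num_paths E L x y w z Rs)%:R) ->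
    Rs' \subset Rs ->
    (#|Rs'|)%:R <= 2 * theta ^+ 4 * n%:R ->
    forall x y w z : 'I_n, disj_pairs x y w z ->
      exists f : {ffun 'I_L.+2 -> 'I_n},
        connecting_path E x y w z (Rs :\: Rs') f.
Proof.
move=> alpha _; exists 2%N => L le2L.
have [k ->] : exists k, L = k.+2 by exists (L - 2)%N; lia.
have K_gt0 : 0 < 8 * k.+1%:R :> R by rewrite mulr_gt0 ?ltr0n.
exists (8 * k.+1%:R)^-1; split; first by rewrite invr_gt0.
move=> th th_gt0 th_le; exists 0%N => n _ E Rs Rs' _ _ Rs_ge _ many_paths _ Rs'_le.
move=> x y w z xywz.
have [f | avoid] := pickP (fun f : {ffun 'I_k.+4 -> 'I_n} =>
  connecting_path E x y w z (Rs :\: Rs') f); first by exists f.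
have n_gt0 : (0 < n)%N := leq_ltn_trans (leq0n _) (ltn_ord x).
have Rs_gt0 : 0 < #|Rs|%:R :> R.
  by apply: lt_le_trans Rs_ge; rewrite mulr_gt0 ?divr_gt0 ?exprn_gt0 ?ltr0n.
have Rs'_small : #|Rs'|%:R <= 4 * th ^+ 2 * #|Rs|%:R :> R.
  apply: le_trans Rs'_le _.
  have -> : 2 * th ^+ 4 * n%:R = 4 * th ^+ 2 * (th ^+ 2 / 2 * n%:R) :> R by field.
  by apply: ler_wpM2l Rs_ge; rewrite mulr_ge0 // exprn_ge0 // ltW.
have th_small : 8 * k%:R * th < 1.
  apply: le_lt_trans (_ : 8 * k%:R * (8 * k.+1%:R)^-1 < 1).
    by rewrite ler_wpM2l ?mulr_ge0.
  by rewrite ltr_pdivrMr // mul1r ltr_pM2l ?ltr_nat.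
have := path_count_gap th_gt0 Rs_gt0 Rs'_small th_small.
rewrite ltNge => /negP[].
apply: le_trans (_ : _ <= (num_paths E k.+2 x y w z Rs)%:R) _.
  by have := many_paths x y w z xywz; rewrite !subSS subn0.
rewrite -natrX -!natrM ler_nat.
by apply: num_paths_avoiding_small_le => f; rewrite avoid.
Qed.
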